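(* Let $\mathcal{A},\mathcal{C}$ be small categories, $P:\mathcal{C}^{op}\times\mathcal{C}\to\mathbf{Set}$ and $Q:\mathcal{A}^{op}\times\mathcal{A}\times\mathcal{C}^{op}\times\mathcal{C}\to\mathbf{Set}$ functors, and let $\pi^*_{\mathcal{A}}(P)(a',a,x',x):=P(x',x)$. Then there are bijections, natural in $P$ and $Q$: (1) between dinatural transformations $\pi^*_{\mathcal{A}}(P)\Rightarrow Q$ (dinatural in $(a,x)\in\mathcal{A}\times\mathcal{C}$) and dinatural transformations $P\Rightarrow E$ (dinatural in $x\in\mathcal{C}$), where $E(x',x):=\int_{a\in\mathcal{A}}Q(a,a,x',x)$; (2) between dinatural transformations $C\Rightarrow P$ (dinatural in $x\in\mathcal{C}$), where $C(x',x):=\int^{a\in\mathcal{A}}Q(a,a,x',x)$, and dinatural transformations $Q\Rightarrow\pi^*_{\mathcal{A}}(P)$ (dinatural in $(a,x)\in\mathcal{A}\times\mathcal{C}$).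
   Context: For difunctors $F,G:\mathcal{B}^{op}\times\mathcal{B}\to\mathcal{D}$, a dinatural transformation is a family $\alpha_x:F(x,x)\to G(x,x)$ such that for every $f:a\to b$: $G(f,\mathrm{id}_b)\circ\alpha_b\circ F(\mathrm{id}_b,f)=G(\mathrm{id}_a,f)\circ\alpha_a\circ F(f,\mathrm{id}_a)$. For $H:\mathcal{A}^{op}\times\mathcal{A}\to\mathbf{Set}$, the end $\int_{a}H(a,a)$ is the set of families $(s_a\in H(a,a))_a$ with $H(\mathrm{id}_a,f)(s_a)=H(f,\mathrm{id}_b)(s_b)$ for all $f:a\to b$, and the coend $\int^aH(a,a)$ is the quotient of $\coprod_aH(a,a)$ by the equivalence relation generated by $H(f,\mathrm{id}_a)(u)\sim H(\mathrm{id}_b,f)(u)$ for $f:a\to b$, $u\in H(b,a)$; these are functorial in the remaining parameters $(x',x)$. *)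

From Stdlib Require Import Relations ProofIrrelevance FunctionalExtensionality PropExtensionality.

Record Cat := {
  ob :> Type;
  hom : ob -> ob -> Type;
  idm : forall a, hom a a;
  cmp : forall a b c, hom b c -> hom a b -> hom a c;
  cmp_id_l : forall a b (f : hom a b), cmp a b b (idm b) f = f;
  cmp_id_r : forall a b (f : hom a b), cmp a a b f (idm a) = f;
  cmp_assoc : forall a b c d (f : hom a b) (g : hom b c) (h : hom c d),
      cmp a c d h (cmp a b c g f) = cmp a b d (cmp b c d h g) f }.
Arguments hom {_} _ _.
Arguments idm {_} a.
Arguments cmp {_ _ _ _} g f.
Arguments cmp_id_l {_ _ _} f.
Arguments cmp_id_r {_ _ _} f.

Definition prodCat (A C : Cat) : Cat.
Proof.
  refine {| ob := (ob A * ob C)%type;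
            hom := fun p q => (hom (fst p) (fst q) * hom (snd p) (snd q))%type;
            idm := fun p => (idm (fst p), idm (snd p));
            cmp := fun p q r g f => (cmp (fst g) (fst f), cmp (snd g) (snd f)) |}.
  - intros [a x] [b y] [f g]; simpl; rewrite !cmp_id_l; reflexivity.
  - intros [a x] [b y] [f g]; simpl; rewrite !cmp_id_r; reflexivity.
  - intros p q r s [f1 f2] [g1 g2] [h1 h2]; simpl; rewrite !cmp_assoc; reflexivity.
Defined.

Definition pmor {A C : Cat} {a b : A} {x y : C} (f : hom a b) (g : hom x y)
  : @hom (prodCat A C) (a, x) (b, y) := (f, g).

(** * Difunctors B^op x B -> Set.
    [dmap F f' f : F a' a -> F b' b] for [f' : b' -> a'] (contravariant slot)
    and [f : a -> b] (covariant slot); it is F(f', f). *)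
Record Difun (B : Cat) := {
  dob :> B -> B -> Type;
  dmap : forall a' a b' b, hom b' a' -> hom a b -> dob a' a -> dob b' b;
  dmap_id : forall a' a (u : dob a' a), dmap a' a a' a (idm a') (idm a) u = u;
  dmap_comp : forall a' a b' b c' c (f' : hom b' a') (f : hom a b)
                (g' : hom c' b') (g : hom b c) (u : dob a' a),
      dmap b' b c' c g' g (dmap a' a b' b f' f u) = dmap a' a c' c (cmp f' g') (cmp g f) u }.
Arguments dob {B} _ _ _.
Arguments dmap {B} _ {a' a b' b} f' f u.
Arguments dmap_id {B} _ {a' a} u.
Arguments dmap_comp {B} _ {a' a b' b c' c} f' f g' g u.

Record NatT {B : Cat} (F G : Difun B) := {
  ncomp :> forall x' x, F x' x -> G x' x;
  nat_ax : forall a' a b' b (f' : hom b' a') (f : hom a b) (u : F a' a),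
      ncomp b' b (dmap F f' f u) = dmap G f' f (ncomp a' a u) }.
Arguments ncomp {B F G} _ _ _ _.
Arguments nat_ax {B F G} _ {a' a b' b} f' f u.

Record Dinat {B : Cat} (F G : Difun B) := {
  dcomp :> forall x, F x x -> G x x;
  dinat : forall a b (f : hom a b) (u : F b a),
      dmap G f (idm b) (dcomp b (dmap F (idm b) f u))
      = dmap G (idm a) f (dcomp a (dmap F f (idm a) u)) }.
Arguments dcomp {B F G} _ _ _.

Definition Bij {X Y : Type} (f : X -> Y) : Prop :=
  exists g : Y -> X, (forall x, g (f x) = x) /\ (forall y, f (g y) = y).

(** * The pullback pi^*_A(P)(a',a,x',x) := P(x',x).
    Functors A^op x A x C^op x C -> Set are represented as difunctors on
    the product category A x C, i.e. Q(a',a,x',x) := Q (a',x') (a,x). *)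
Definition pullbackA (A : Cat) {C : Cat} (P : Difun C) : Difun (prodCat A C).
Proof.
  refine {| dob := fun (p' p : prodCat A C) => P (snd p') (snd p);
            dmap := fun (p' p q' q : prodCat A C) (f' : @hom (prodCat A C) q' p')
                        (f : @hom (prodCat A C) p q) u => dmap P (snd f') (snd f) u |}.
  - intros; apply dmap_id.
  - intros; apply dmap_comp.
Defined.

Lemma sig_eq {X : Type} {Pr : X -> Prop} (u v : {x | Pr x}) :
  proj1_sig u = proj1_sig v -> u = v.
Proof.
  destruct u as [x p], v as [y q]; simpl; intros ->; f_equal; apply proof_irrelevance.
Qed.

Definition EndT {A C : Cat} (Q : Difun (prodCat A C)) (x' x : C) : Type :=
  { s : forall a : A, Q (a, x') (a, x) |
    forall (a b : A) (f : hom a b),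
      dmap Q (pmor (idm a) (idm x')) (pmor f (idm x)) (s a)
      = dmap Q (pmor f (idm x')) (pmor (idm b) (idm x)) (s b) }.

Ltac catsimp := cbn [pmor prodCat cmp idm fst snd] in *;
  repeat (rewrite ?cmp_id_l, ?cmp_id_r in *).

Lemma End_act_ok {A C : Cat} (Q : Difun (prodCat A C)) {x' x y' y : C}
  (h' : hom y' x') (h : hom x y) (s : EndT Q x' x) :
  forall (a b : A) (f : hom a b),
    dmap Q (pmor (idm a) (idm y')) (pmor f (idm y))
      (dmap Q (pmor (idm a) h') (pmor (idm a) h) (proj1_sig s a))
    = dmap Q (pmor f (idm y')) (pmor (idm b) (idm y))
      (dmap Q (pmor (idm b) h') (pmor (idm b) h) (proj1_sig s b)).
Proof.
  intros a b f.
  pose proof (f_equal (dmap Q (pmor (idm a) h') (pmor (idm b) h)) (proj2_sig s a b f)) as H.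
  rewrite !dmap_comp in H |- *. unfold pmor in *. catsimp. exact H.
Qed.

Definition End_act {A C : Cat} (Q : Difun (prodCat A C)) {x' x y' y : C}
  (h' : hom y' x') (h : hom x y) (s : EndT Q x' x) : EndT Q y' y :=
  exist _ (fun a => dmap Q (pmor (idm a) h') (pmor (idm a) h) (proj1_sig s a))
        (End_act_ok Q h' h s).

Definition EndD {A C : Cat} (Q : Difun (prodCat A C)) : Difun C.
Proof.
  refine {| dob := EndT Q; dmap := fun x' x y' y h' h s => End_act Q h' h s |}.
  - intros x' x s; apply sig_eq; simpl; apply functional_extensionality_dep; intro a.
    exact (dmap_id Q _).
  - intros; apply sig_eq; simpl; apply functional_extensionality_dep; intro a0.
    rewrite dmap_comp. unfold pmor. catsimp. reflexivity.
Defined.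

Definition End_nat {A C : Cat} {Q Q' : Difun (prodCat A C)} (psi : NatT Q Q')
  (x' x : C) (s : EndT Q x' x) : EndT Q' x' x.
Proof.
  refine (exist _ (fun a => psi (a, x') (a, x) (proj1_sig s a)) _).
  intros a b f. rewrite <- !(nat_ax psi). f_equal. exact (proj2_sig s a b f).
Defined.

Definition quot {T : Type} (R : relation T) : Type :=
  { S : T -> Prop | exists t, S = clos_refl_sym_trans T R t }.

Definition qcl {T : Type} (R : relation T) (t : T) : quot R :=
  exist _ (clos_refl_sym_trans T R t) (ex_intro _ t eq_refl).

Lemma crst_map {T U : Type} (R : relation T) (R' : relation U) (f : T -> U)
  (Hf : forall t t', R t t' -> clos_refl_sym_trans U R' (f t) (f t')) :
  forall t t', clos_refl_sym_trans T R t t' -> clos_refl_sym_trans U R' (f t) (f t').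
Proof.
  induction 1.
  - auto.
  - apply rst_refl.
  - apply rst_sym; auto.
  - eapply rst_trans; eauto.
Qed.

Lemma qmap_ok {T U : Type} (R : relation T) (R' : relation U) (f : T -> U)
  (Hf : forall t t', R t t' -> clos_refl_sym_trans U R' (f t) (f t'))
  (S : T -> Prop) (t : T) : S = clos_refl_sym_trans T R t ->
  (fun u => exists t0, S t0 /\ clos_refl_sym_trans U R' (f t0) u)
  = clos_refl_sym_trans U R' (f t).
Proof.
  intros ->. apply functional_extensionality; intro u.
  apply propositional_extensionality; split.
  - intros [t0 [H1 H2]]. eapply rst_trans; [|exact H2]. exact (crst_map R R' f Hf _ _ H1).
  - intros H. exists t. split; [apply rst_refl | exact H].
Qed.

Definition qmap {T U : Type} (R : relation T) (R' : relation U) (f : T -> U)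
  (Hf : forall t t', R t t' -> clos_refl_sym_trans U R' (f t) (f t'))
  (S : quot R) : quot R'.
Proof.
  refine (exist _ (fun u => exists t0, proj1_sig S t0 /\ clos_refl_sym_trans U R' (f t0) u) _).
  destruct S as [S [t Ht]]. exists (f t). exact (qmap_ok R R' f Hf S t Ht).
Defined.

Lemma qmap_id {T : Type} (R : relation T) (f : T -> T) Hf (S : quot R) :
  (forall t, f t = t) -> qmap R R f Hf S = S.
Proof.
  intros Hid. apply sig_eq. destruct S as [S [t Ht]]. simpl.
  rewrite (qmap_ok R R f Hf S t Ht), Hid. symmetry; exact Ht.
Qed.

Lemma qmap_comp {T U V : Type} (R : relation T) (R' : relation U) (R'' : relation V)
  (f : T -> U) Hf (g : U -> V) Hg (k : T -> V) Hk (S : quot R) :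
  (forall t, g (f t) = k t) -> qmap R' R'' g Hg (qmap R R' f Hf S) = qmap R R'' k Hk S.
Proof.
  intros Hgf. apply sig_eq. destruct S as [S [t Ht]]. simpl.
  rewrite (qmap_ok R' R'' g Hg _ (f t) (qmap_ok R R' f Hf S t Ht)).
  rewrite (qmap_ok R R'' k Hk S t Ht), Hgf. reflexivity.
Qed.

(** * Coends: C(x',x) := \int^a Q(a,a,x',x), the quotient of
    coprod_a Q(a,a,x',x) by the equivalence relation generated by
    Q(f,id_a)(u) ~ Q(id_b,f)(u) for f : a -> b, u : Q(b,a,x',x). *)
Definition CoendPre {A C : Cat} (Q : Difun (prodCat A C)) (x' x : C) : Type :=
  { a : A & Q (a, x') (a, x) }.

Definition CoendRel {A C : Cat} (Q : Difun (prodCat A C)) (x' x : C)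
  : relation (CoendPre Q x' x) :=
  fun t t' => exists (a b : A) (f : hom a b) (u : Q (b, x') (a, x)),
    t = existT _ a (dmap Q (pmor f (idm x')) (pmor (idm a) (idm x)) u) /\
    t' = existT _ b (dmap Q (pmor (idm b) (idm x')) (pmor f (idm x)) u).

Definition CoendT {A C : Cat} (Q : Difun (prodCat A C)) (x' x : C) : Type :=
  quot (CoendRel Q x' x).

Definition coend_pre_act {A C : Cat} (Q : Difun (prodCat A C)) {x' x y' y : C}
  (h' : hom y' x') (h : hom x y) (t : CoendPre Q x' x) : CoendPre Q y' y :=
  existT _ (projT1 t) (dmap Q (pmor (idm (projT1 t)) h') (pmor (idm (projT1 t)) h) (projT2 t)).

Lemma coend_pre_act_ok {A C : Cat} (Q : Difun (prodCat A C)) {x' x y' y : C}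
  (h' : hom y' x') (h : hom x y) :
  forall t t', CoendRel Q x' x t t' ->
    clos_refl_sym_trans _ (CoendRel Q y' y) (coend_pre_act Q h' h t) (coend_pre_act Q h' h t').
Proof.
  intros t t' [a [b [f [u [-> ->]]]]]. apply rst_step.
  exists a, b, f, (dmap Q (pmor (idm b) h') (pmor (idm a) h) u).
  unfold coend_pre_act; simpl. rewrite !dmap_comp. unfold pmor. catsimp.
  split; reflexivity.
Qed.

Definition Coend_act {A C : Cat} (Q : Difun (prodCat A C)) {x' x y' y : C}
  (h' : hom y' x') (h : hom x y) : CoendT Q x' x -> CoendT Q y' y :=
  qmap _ _ (coend_pre_act Q h' h) (coend_pre_act_ok Q h' h).

Definition CoendD {A C : Cat} (Q : Difun (prodCat A C)) : Difun C.
Proof.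
  refine {| dob := CoendT Q; dmap := fun x' x y' y h' h c => Coend_act Q h' h c |}.
  - intros x' x c. apply qmap_id. intros [a u]. unfold coend_pre_act; simpl.
    f_equal. exact (dmap_id Q u).
  - intros. unfold Coend_act. apply qmap_comp. intros [a0 w]. unfold coend_pre_act; simpl.
    rewrite dmap_comp. unfold pmor. catsimp. reflexivity.
Defined.

Definition coend_pre_nat {A C : Cat} {Q Q' : Difun (prodCat A C)} (psi : NatT Q Q')
  (x' x : C) (t : CoendPre Q x' x) : CoendPre Q' x' x :=
  existT _ (projT1 t) (psi (projT1 t, x') (projT1 t, x) (projT2 t)).

Lemma coend_pre_nat_ok {A C : Cat} {Q Q' : Difun (prodCat A C)} (psi : NatT Q Q') (x' x : C) :
  forall t t', CoendRel Q x' x t t' ->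
    clos_refl_sym_trans _ (CoendRel Q' x' x) (coend_pre_nat psi x' x t) (coend_pre_nat psi x' x t').
Proof.
  intros t t' [a [b [f [u [-> ->]]]]]. apply rst_step.
  exists a, b, f, (psi (b, x') (a, x) u). unfold coend_pre_nat; simpl.
  rewrite !(nat_ax psi). split; reflexivity.
Qed.

Definition Coend_nat {A C : Cat} {Q Q' : Difun (prodCat A C)} (psi : NatT Q Q')
  (x' x : C) : CoendT Q x' x -> CoendT Q' x' x :=
  qmap _ _ (coend_pre_nat psi x' x) (coend_pre_nat_ok psi x' x).

From Stdlib Require Import Relations ProofIrrelevance FunctionalExtensionality PropExtensionality ClassicalEpsilon.

(* Both bijections are currying. For fixed x and u : P(x,x), dinaturality of
   a family α_(a,x) in a alone says exactly that a ↦ α_(a,x)(u) is a wedge, i.e.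
   an element of the end, and dinaturality in x alone is then dinaturality of
   the induced map into the end. Dually, dinaturality of Q(a,a,x,x) → P(x,x) in
   a alone says that the coproduct of the components respects the relation
   defining the coend. What makes this work is that joint dinaturality in
   (a,x) follows from dinaturality in each variable separately. *)

Lemma qcl_eq {T : Type} (R : relation T) (t t' : T) :
  clos_refl_sym_trans T R t t' -> qcl R t = qcl R t'.
Proof.
  intro Htt'. apply sig_eq; simpl. apply functional_extensionality; intro z.
  apply propositional_extensionality; split; intro Hz.
  - eapply rst_trans; [apply rst_sym; exact Htt' | exact Hz].
  - eapply rst_trans; [exact Htt' | exact Hz].
Qed.

Lemma qcl_surj {T : Type} (R : relation T) (c : quot R) : exists t, c = qcl R t.
Proof.
  destruct c as [S [t Ht]]. exists t. apply sig_eq. exact Ht.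
Qed.

Lemma qmap_qcl {T U : Type} (R : relation T) (R' : relation U) (f : T -> U) Hf (t : T) :
  qmap R R' f Hf (qcl R t) = qcl R' (f t).
Proof. apply sig_eq. exact (qmap_ok R R' f Hf _ t eq_refl). Qed.

Definition qlift {T Y : Type} (R : relation T) (F : T -> Y) (c : quot R) : Y :=
  F (proj1_sig (constructive_indefinite_description _ (proj2_sig c))).

Lemma qlift_qcl {T Y : Type} (R : relation T) (F : T -> Y) (t : T) :
  (forall t t', R t t' -> F t = F t') -> qlift R F (qcl R t) = F t.
Proof.
  intro HF. unfold qlift.
  destruct (constructive_indefinite_description _ (proj2_sig (qcl R t))) as [t0 e].
  simpl. assert (Htt0 : clos_refl_sym_trans T R t t0) by (simpl in e; rewrite e; apply rst_refl).
  clear e. symmetry.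
  induction Htt0; [auto | reflexivity | symmetry; assumption | etransitivity; eassumption].
Qed.

Lemma dinat_ext {B : Cat} {F G : Difun B} (d1 d2 : Dinat F G) :
  (forall x u, dcomp d1 x u = dcomp d2 x u) -> d1 = d2.
Proof.
  destruct d1 as [c1 p1], d2 as [c2 p2]; simpl; intro Hc.
  assert (c1 = c2) as <-.
  { apply functional_extensionality_dep; intro x.
    apply functional_extensionality; intro u. apply Hc. }
  f_equal. apply proof_irrelevance.
Qed.

Definition dinatural_at {B : Cat} (F G : Difun B) (al : forall x, F x x -> G x x)
  {a b : B} (f : hom a b) : Prop :=
  forall u : F b a,
    dmap G f (idm b) (al b (dmap F (idm b) f u)) = dmap G (idm a) f (al a (dmap F f (idm a) u)).

(* Factor (g, h) as (g, id) ∘ (id, h) and paste the two hexagons along the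
   middle component α_(a,y). *)
Lemma dinatural_at_prodCat {A C : Cat} {F G : Difun (prodCat A C)}
  (al : forall p, F p p -> G p p)
  (dinat_l : forall (a b : A) (y : C) (g : hom a b), dinatural_at F G al (pmor g (idm y)))
  (dinat_r : forall (a : A) (x y : C) (h : hom x y), dinatural_at F G al (pmor (idm a) h)) :
  forall (p q : prodCat A C) (f : hom p q), dinatural_at F G al f.
Proof.
  intros [a x] [b y] [g h] u.
  pose proof (f_equal (dmap G (pmor (idm a) h) (@idm (prodCat A C) (b, y)))
                (dinat_l a b y g (dmap F (@idm (prodCat A C) (b, y)) (pmor (idm a) h) u))) as Hl.
  pose proof (f_equal (dmap G (@idm (prodCat A C) (a, x)) (pmor g (idm y)))
                (dinat_r a x y h (dmap F (pmor g (idm y)) (@idm (prodCat A C) (a, x)) u))) as Hr.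
  rewrite !dmap_comp in Hl, Hr. unfold pmor in *. catsimp.
  rewrite Hl. exact Hr.
Qed.

Section EndCorrespondence.
Variables (A C : Cat).
Context (P : Difun C) (Q : Difun (prodCat A C)).

Definition Phi_wedge (al : Dinat (pullbackA A P) Q) (x : C) (u : P x x) : EndT Q x x.
Proof.
  refine (exist _ (fun a => dcomp al (a, x) u) _).
  intros a b f. pose proof (dinat _ _ al (a, x) (b, x) (pmor f (idm x)) u) as Hf.
  cbn in Hf. rewrite !dmap_id in Hf. symmetry. exact Hf.
Defined.

Definition Phi (al : Dinat (pullbackA A P) Q) : Dinat P (EndD Q).
Proof.
  refine (Build_Dinat C P (EndD Q) (Phi_wedge al) _).
  intros x y h u. apply sig_eq. apply functional_extensionality_dep; intro a.
  exact (dinat _ _ al (a, x) (a, y) (pmor (idm a) h) u).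
Defined.

Definition PhiInv_comp (be : Dinat P (EndD Q)) (p : prodCat A C) :
  pullbackA A P p p -> Q p p :=
  match p with (a, x) => fun u => proj1_sig (dcomp be x u) a end.

Definition PhiInv (be : Dinat P (EndD Q)) : Dinat (pullbackA A P) Q.
Proof.
  refine (Build_Dinat _ (pullbackA A P) Q (PhiInv_comp be)
            (dinatural_at_prodCat (PhiInv_comp be) _ _)).
  - intros a b x g u. cbn. rewrite !dmap_id.
    symmetry. exact (proj2_sig (dcomp be x u) a b g).
  - intros a x y h u. exact (f_equal (fun s => proj1_sig s a) (dinat _ _ be x y h u)).
Defined.

Lemma Phi_bij : Bij Phi.
Proof.
  exists PhiInv. split.
  - intro al. apply dinat_ext. intros [a x] u. reflexivity.
  - intro be. apply dinat_ext. intros x u. apply sig_eq. reflexivity.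
Qed.

End EndCorrespondence.

Lemma Phi_natural {A C : Cat} (P P' : Difun C) (Q Q' : Difun (prodCat A C))
  (phi : NatT P' P) (psi : NatT Q Q')
  (alpha : Dinat (pullbackA A P) Q) (alpha' : Dinat (pullbackA A P') Q') :
  (forall (p : prodCat A C) (u : P' (snd p) (snd p)),
      dcomp alpha' p u = ncomp psi p p (dcomp alpha p (ncomp phi (snd p) (snd p) u))) ->
  forall (x : C) (u : P' x x),
    dcomp (Phi A C P' Q' alpha') x u
    = End_nat psi x x (dcomp (Phi A C P Q alpha) x (ncomp phi x x u)).
Proof.
  intros Halpha x u. apply sig_eq. apply functional_extensionality_dep; intro a.
  exact (Halpha (a, x) u).
Qed.

Section CoendCorrespondence.
Variables (A C : Cat).
Context (P : Difun C) (Q : Difun (prodCat A C)).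

Lemma Coend_act_qcl {x' x y' y : C} (h' : hom y' x') (h : hom x y) (t : CoendPre Q x' x) :
  dmap (CoendD Q) h' h (qcl (CoendRel Q x' x) t) = qcl (CoendRel Q y' y) (coend_pre_act Q h' h t).
Proof. apply qmap_qcl. Qed.

Definition Psi_comp (be : Dinat (CoendD Q) P) (p : prodCat A C) : Q p p -> pullbackA A P p p :=
  match p with (a, x) => fun u => dcomp be x (qcl (CoendRel Q x x) (existT _ a u)) end.

Definition Psi (be : Dinat (CoendD Q) P) : Dinat Q (pullbackA A P).
Proof.
  refine (Build_Dinat _ Q (pullbackA A P) (Psi_comp be)
            (dinatural_at_prodCat (Psi_comp be) _ _)).
  - intros a b x g u. cbn. rewrite !dmap_id. f_equal. apply qcl_eq, rst_sym, rst_step.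
    exists a, b, g, u. split; reflexivity.
  - intros a x y h u. pose proof (dinat _ _ be x y h (qcl _ (existT _ a u))) as Hh.
    rewrite (Coend_act_qcl (idm y) h), (Coend_act_qcl h (idm x)) in Hh. exact Hh.
Defined.

Definition PsiInv_pre (ga : Dinat Q (pullbackA A P)) (x : C) (t : CoendPre Q x x) : P x x :=
  dcomp ga (projT1 t, x) (projT2 t).

Lemma PsiInv_pre_compat (ga : Dinat Q (pullbackA A P)) (x : C) (t t' : CoendPre Q x x) :
  CoendRel Q x x t t' -> PsiInv_pre ga x t = PsiInv_pre ga x t'.
Proof.
  intros [a [b [f [u [-> ->]]]]].
  pose proof (dinat _ _ ga (a, x) (b, x) (pmor f (idm x)) u) as Hf.
  cbn in Hf. rewrite !dmap_id in Hf. symmetry. exact Hf.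
Qed.

Lemma qlift_PsiInv_pre (ga : Dinat Q (pullbackA A P)) (x : C) (t : CoendPre Q x x) :
  qlift (CoendRel Q x x) (PsiInv_pre ga x) (qcl (CoendRel Q x x) t) = PsiInv_pre ga x t.
Proof. apply qlift_qcl, PsiInv_pre_compat. Qed.

Definition PsiInv (ga : Dinat Q (pullbackA A P)) : Dinat (CoendD Q) P.
Proof.
  refine (Build_Dinat C (CoendD Q) P (fun x => qlift (CoendRel Q x x) (PsiInv_pre ga x)) _).
  intros x y h c. destruct (qcl_surj _ c) as [[a v] ->].
  rewrite !Coend_act_qcl, !qlift_PsiInv_pre.
  exact (dinat _ _ ga (a, x) (a, y) (pmor (idm a) h) v).
Defined.

Lemma Psi_bij : Bij Psi.
Proof.
  exists PsiInv. split.
  - intro be. apply dinat_ext. intros x c. destruct (qcl_surj _ c) as [[a v] ->].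
    apply qlift_PsiInv_pre.
  - intro ga. apply dinat_ext. intros [a x] u. apply qlift_PsiInv_pre.
Qed.

End CoendCorrespondence.

Lemma Psi_natural {A C : Cat} (P P' : Difun C) (Q Q' : Difun (prodCat A C))
  (phi : NatT P P') (psi : NatT Q' Q)
  (beta : Dinat (CoendD Q) P) (beta' : Dinat (CoendD Q') P') :
  (forall (x : C) (c : CoendT Q' x x),
      dcomp beta' x c = ncomp phi x x (dcomp beta x (Coend_nat psi x x c))) ->
  forall (p : prodCat A C) (u : Q' p p),
    dcomp (Psi A C P' Q' beta') p u
    = ncomp phi (snd p) (snd p) (dcomp (Psi A C P Q beta) p (ncomp psi p p u)).
Proof.
  intros Hbeta [a x] u. simpl. rewrite Hbeta. unfold Coend_nat. rewrite qmap_qcl. reflexivity.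
Qed.

Theorem mainTheorem4 (A C : Cat) :
  (* (1)  Dinat(pi_A^* P, Q)  ~=  Dinat(P, \int_a Q(a,a,-,-)), naturally in P and Q *)
  (exists Phi : forall (P : Difun C) (Q : Difun (prodCat A C)),
       Dinat (pullbackA A P) Q -> Dinat P (EndD Q),
     (forall P Q, Bij (Phi P Q)) /\
     (forall (P P' : Difun C) (Q Q' : Difun (prodCat A C))
        (phi : NatT P' P) (psi : NatT Q Q')
        (alpha : Dinat (pullbackA A P) Q) (alpha' : Dinat (pullbackA A P') Q'),
        (forall (p : prodCat A C) (u : P' (snd p) (snd p)),
            dcomp alpha' p u = ncomp psi p p (dcomp alpha p (ncomp phi (snd p) (snd p) u))) ->
        forall (x : C) (u : P' x x),
          dcomp (Phi P' Q' alpha') x u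
          = End_nat psi x x (dcomp (Phi P Q alpha) x (ncomp phi x x u)))) /\
  (* (2)  Dinat(\int^a Q(a,a,-,-), P)  ~=  Dinat(Q, pi_A^* P), naturally in P and Q *)
  (exists Psi : forall (P : Difun C) (Q : Difun (prodCat A C)),
       Dinat (CoendD Q) P -> Dinat Q (pullbackA A P),
     (forall P Q, Bij (Psi P Q)) /\
     (forall (P P' : Difun C) (Q Q' : Difun (prodCat A C))
        (phi : NatT P P') (psi : NatT Q' Q)
        (beta : Dinat (CoendD Q) P) (beta' : Dinat (CoendD Q') P'),
        (forall (x : C) (c : CoendT Q' x x),
            dcomp beta' x c = ncomp phi x x (dcomp beta x (Coend_nat psi x x c))) ->
        forall (p : prodCat A C) (u : Q' p p),
          dcomp (Psi P' Q' beta') p u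
          = ncomp phi (snd p) (snd p) (dcomp (Psi P Q beta) p (ncomp psi p p u)))).
Proof.
  split.
  - exists (Phi A C). split; [exact (Phi_bij A C) | exact Phi_natural].
  - exists (Psi A C). split; [exact (Psi_bij A C) | exact Psi_natural].
Qed.
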